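(* Let $D$ be a finite distributive lattice. Suppose that $D$ is fully $\mathrm{A}^{+1}$-representable, that is: for every set $Q$ with $J^+(D)\subseteq Q\subseteq D$ there exist an algebra $A$ and a lattice isomorphism $\phi\colon\mathrm{Con}(A)\to D$ with $\phi(\mathrm{Princ}(A))=Q$. Then $D$ is planar and $D$ has at most one join-reducible coatom.
   Context: For a finite lattice $L$, $J(L)$ denotes the set of nonzero join-irreducible elements of $L$ and $J^+(L)=J(L)\cup\{0_L,1_L\}$. For an algebra $A$, $\mathrm{Con}(A)$ is its congruence lattice and $\mathrm{Princ}(A)$ is the set of its principal congruences $\mathrm{con}(a,b)$, $a,b\in A$ (the least congruence containing $(a,b)$). A lattice is planar if it is finite and has a Hasse diagram drawable in the plane without crossing edges. A coatom is an element covered by $1$; it is join-reducible if it is not join-irreducible. *)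

From HB Require Import structures.
From mathcomp Require Import all_boot all_order all_algebra.
Set Implicit Arguments. Unset Strict Implicit. Unset Printing Implicit Defensive.
Import Order.TTheory GRing.Theory Num.Theory.

Local Open Scope order_scope.

Section LatticeNotions.
Context {disp : Order.disp_t} {L : finTBLatticeType disp}.

Definition join_irr (x : L) : Prop :=
  x != \bot /\ forall y z : L, x = y `|` z -> x = y \/ x = z.

Definition in_Jplus (x : L) : Prop := join_irr x \/ x = \bot \/ x = \top.

Definition covers (x y : L) : bool :=
  (x < y) && [forall z : L, ~~ ((x < z) && (z < y))].

Definition coatom (x : L) : bool := covers x \top.

Definition join_red (x : L) : Prop := ~ join_irr x.

Local Open Scope ring_scope.

Definition on_segment (p a b : rat * rat) : Prop :=
  exists t : rat, [/\ 0 <= t, t <= 1,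
     p.1 = a.1 + t * (b.1 - a.1) & p.2 = a.2 + t * (b.2 - a.2)].

Definition planar_drawing (pos : L -> rat * rat) : Prop :=
  [/\ injective pos,
      (forall x y : L, covers x y -> (pos x).2 < (pos y).2),
      (forall x y z : L, covers x y -> z != x -> z != y ->
          ~ on_segment (pos z) (pos x) (pos y))
    &
      (forall x1 y1 x2 y2 : L, covers x1 y1 -> covers x2 y2 ->
          (x1, y1) != (x2, y2) ->
          forall p, on_segment p (pos x1) (pos y1) ->
                    on_segment p (pos x2) (pos y2) ->
          exists v : L, [/\ v \in [:: x1; y1], v \in [:: x2; y2] & p = pos v])].

Definition planar : Prop := exists pos : L -> rat * rat, planar_drawing pos.

End LatticeNotions.

Record algebra := Algebra {
  carrier : Type;
  elt0 : carrier;                      (* carrier is nonempty *)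
  opsym : Type;
  arity : opsym -> nat;
  op : forall f : opsym, ('I_(arity f) -> carrier) -> carrier
}.

Definition is_congruence (A : algebra) (R : carrier A -> carrier A -> Prop) : Prop :=
  [/\ (forall x, R x x),
      (forall x y, R x y -> R y x),
      (forall x y z, R x y -> R y z -> R x z)
    & (forall (f : opsym A) (u v : 'I_(arity f) -> carrier A),
         (forall i, R (u i) (v i)) -> R (op u) (op v))].

Definition con (A : algebra) (a b : carrier A) : carrier A -> carrier A -> Prop :=
  fun x y => forall R, is_congruence R -> R a b -> R x y.

(* phi : Con(A) -> D is a lattice isomorphism (equivalently, an order
   isomorphism between the lattices) with phi(Princ(A)) = Q. *)
Definition represents {disp : Order.disp_t} {D : finTBDistrLatticeType disp}
    (A : algebra) (phi : (carrier A -> carrier A -> Prop) -> D) (Q : {set D}) : Prop :=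
  [/\ (forall R S, is_congruence R -> is_congruence S ->
         ((forall x y, R x y -> S x y) <-> (phi R <= phi S)%O)),
      (forall d : D, exists2 R, is_congruence R & phi R = d)
    & (forall d : D, d \in Q <-> exists a b : carrier A, phi (con a b) = d)].

Definition fully_Aplus1_representable {disp : Order.disp_t}
    (D : finTBDistrLatticeType disp) : Prop :=
  forall Q : {set D}, (forall x : D, in_Jplus x -> x \in Q) ->
    exists (A : algebra) (phi : (carrier A -> carrier A -> Prop) -> D),
      represents phi Q.

From HB Require Import structures.
From mathcomp Require Import all_boot all_order all_algebra.
From mathcomp Require Import lra.
From Stdlib Require Import FunctionalExtensionality.
Set Implicit Arguments. Unset Strict Implicit. Unset Printing Implicit Defensive.
Import Order.TTheory GRing.Theory Num.Theory.
Local Open Scope order_scope.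

(* Both conclusions come from representations in which exactly one element [s] outside
   J^+(D) is principal.  If phi (con a b) = s, then b is reached from a by steps (z, w)
   with phi (con z w) below one of finitely many elements whose join is above s, and every
   phi (con a x) along the way lies in J^+(D) + {s}.  For pairwise incomparable
   join-irreducibles p, q, r and s = p | q | r, such a walk can never climb up to s; for
   distinct join-reducible coatoms c1, c2 and s = c1 & c2, it never leaves the interval
   below s, which forces s = 1.  Hence J(D) has width two, so it is the union of two chains
   C1, C2, and x |-> (#|C1 below x|, #|J(D) below x|) draws every covering pair of D as a
   unit grid edge of slope 1 or vertical; such edges meet only at common endpoints. *)

Section FiniteLattice.
Context {disp : Order.disp_t} {L : finTBLatticeType disp}.
Implicit Types x y z j c : L.

Definition join_irrb x : bool :=
  (x != \bot) && [forall y, forall z, (x == y `|` z) ==> (x == y) || (x == z)].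

Lemma join_irrP x : reflect (join_irr x) (join_irrb x).
Proof.
apply: (iffP andP) => [[nb /forallP h]|[nb h]]; split => //.
- move=> y z e; have /forallP/(_ z)/implyP := h y.
  by rewrite e eqxx => /(_ isT) /orP [/eqP|/eqP]; [left|right].
- apply/forallP => y; apply/forallP => z; apply/implyP => /eqP /h.
  by case=> ->; rewrite eqxx ?orbT.
Qed.

Lemma join_irr_le x y : (forall j, join_irr j -> j <= y -> j <= x) -> y <= x.
Proof.
have [n] := ubnP #|[set z | z < y]|; elim: n y => // n IH y lt_y_n le_j.
have [->|nby] := eqVneq y \bot; first exact: le0x.
have [/join_irrP jy|njy] := boolP (join_irrb y); first exact: le_j.
have [u [w [e_y ne_u ne_w]]] : exists u w, [/\ y = u `|` w, y != u & y != w].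
  move: njy; rewrite /join_irrb nby negb_forall => /existsP [u].
  rewrite negb_forall => /existsP [w]; rewrite negb_imply negb_or.
  by case/and3P => /eqP e ? ?; exists u, w.
have below v : v <= y -> y != v -> v <= x.
  move=> le_v ne_v; have lt_v : v < y by rewrite lt_def ne_v.
  apply: IH => [|j jj le_jv]; last exact: le_j jj (le_trans le_jv le_v).
  rewrite -ltnS; apply: leq_trans lt_y_n; apply: proper_card; apply/properP.
  split; last by exists v; rewrite !inE ?lt_v ?ltxx.
  by apply/subsetP => t; rewrite !inE => /lt_trans; apply.
by rewrite e_y leUx !below // e_y ?leUl ?leUr.
Qed.

Lemma covers_joinE x y z : covers x y -> z <= y -> ~~ (z <= x) -> x `|` z = y.
Proof.
case/andP => lt_xy /forallP cov le_zy nle_zx.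
have lt_x : x < x `|` z.
  by rewrite lt_def leUl andbT; apply: contra nle_zx => /eqP <-; rewrite leUr.
apply/eqP; apply: contraNT (cov (x `|` z)) => ne.
by rewrite lt_x lt_def leUx (ltW lt_xy) le_zy eq_sym ne.
Qed.

Lemma coatom_lt c : coatom c -> c < \top.
Proof. by case/andP. Qed.

Lemma coatom_le_eq c1 c2 : coatom c1 -> coatom c2 -> c1 <= c2 -> c1 = c2.
Proof.
move=> /andP [_ /forallP cov1] cov2 le_c12; apply/eqP.
apply: contraNT (cov1 c2) => ne.
by rewrite (coatom_lt cov2) andbT lt_def le_c12 eq_sym ne.
Qed.

End FiniteLattice.

Section FiniteDistrLattice.
Context {disp : Order.disp_t} {L : finTBDistrLatticeType disp}.
Implicit Types x y z j c : L.

Lemma join_irr_prime j x y : join_irr j -> j <= x `|` y -> j <= x \/ j <= y.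
Proof.
move=> [_ hj] le.
have : j = (j `&` x) `|` (j `&` y) by rewrite -meetUr; apply/esym/meet_idPl.
by case/hj => e; [left|right]; apply/meet_idPl; exact/esym.
Qed.

Lemma covers_join_irr x y : covers x y ->
  exists j0, [/\ join_irr j0, j0 <= y, ~~ (j0 <= x) &
     forall j, join_irr j -> j <= y -> ~~ (j <= x) -> j = j0].
Proof.
move=> cov; have lt_xy : x < y by case/andP: cov.
have /existsP [j0 /and3P [/join_irrP jj0 j0y j0x]] :
    [exists j, [&& join_irrb j, j <= y & ~~ (j <= x)]].
  apply: contraT => /existsPn none; rewrite -(lt_geF lt_xy).
  by apply: join_irr_le => j /join_irrP jj jy; move: (none j); rewrite jj jy negbK.
exists j0; split => // j jj jy jx.
have le_j : j <= x `|` j0 by rewrite (covers_joinE cov j0y j0x).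
have le_j0 : j0 <= x `|` j by rewrite (covers_joinE cov jy jx).
case: (join_irr_prime jj le_j) => [h|h]; first by rewrite h in jx.
case: (join_irr_prime jj0 le_j0) => [h'|h']; first by rewrite h' in j0x.
by apply: le_anti; rewrite h h'.
Qed.

Lemma coatom_meet_join c1 c2 z : coatom c1 -> z <= c2 -> ~~ (z <= c1) ->
  (c1 `&` c2) `|` z = c2.
Proof.
move=> cov1 le_z2 nle_z1.
by rewrite joinIl (covers_joinE cov1 (lex1 z) nle_z1) meet1x; apply/join_idPl.
Qed.

(* One of p, q, r differs from both X and Y and yet lies below X | Y. *)
Lemma join_antichain3_nle (p q r X Y : L) : join_irr p -> join_irr q -> join_irr r ->
  p >< q -> q >< r -> p >< r -> X \in [:: p; q; r] -> Y \in [:: p; q; r] ->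
  ~~ (p `|` q `|` r <= X `|` Y).
Proof.
move=> jp jq jr npq nqr npr; rewrite !inE => eX eY; apply/negP => le_s.
have le_p : p <= X `|` Y by apply: le_trans le_s; rewrite -joinA leUl.
have le_q : q <= X `|` Y by apply: le_trans le_s; rewrite joinAC leUr.
have le_r : r <= X `|` Y by apply: le_trans le_s; rewrite leUr.
case/or3P: eX => /eqP eX; case/or3P: eY => /eqP eY; subst X Y;
first [ by case: (join_irr_prime jp le_p) => h;
          rewrite ?(le_comparable h) ?(ge_comparable h) in npq nqr npr
      | by case: (join_irr_prime jq le_q) => h;
          rewrite ?(le_comparable h) ?(ge_comparable h) in npq nqr npr
      | by case: (join_irr_prime jr le_r) => h;
          rewrite ?(le_comparable h) ?(ge_comparable h) in npq nqr npr ].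
Qed.

End FiniteDistrLattice.

Section WidthTwo.
Context {disp : Order.disp_t} {T : finPOrderType disp}.
Implicit Types (S C E F : {set T}) (x y z a : T).

Definition chain C := {in C &, forall x y, x >=< y}.

Definition width2 S := {in S & &, forall x y z, [|| x >=< y, y >=< z | x >=< z]}.

Lemma set_has_maximal S : S != set0 ->
  exists2 t, t \in S & forall z, z \in S -> t <= z -> z = t.
Proof.
case/set0Pn => x0 Sx0.
case: (arg_minnP (fun x => #|[set z in S | x < z]|) Sx0) => t St min_t.
exists t => // z Sz le_tz; apply/eqP; apply: contraTT (min_t z Sz) => ne.
have lt_tz : t < z by rewrite lt_def ne.
rewrite -ltnNge; apply: proper_card; apply/properP; split.
  by apply/subsetP => y; rewrite !inE => /andP [-> /(lt_trans lt_tz)].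
by exists z; rewrite !inE ?Sz ?lt_tz ?ltxx.
Qed.

Lemma set_has_minimal S : S != set0 ->
  exists2 b, b \in S & forall z, z \in S -> z <= b -> z = b.
Proof.
case/set0Pn => x0 Sx0.
case: (arg_minnP (fun x => #|[set z in S | z < x]|) Sx0) => b Sb min_b.
exists b => // z Sz le_zb; apply/eqP; apply: contraTT (min_b z Sz) => ne.
have lt_zb : z < b by rewrite lt_def eq_sym ne.
rewrite -ltnNge; apply: proper_card; apply/properP; split.
  by apply/subsetP => y; rewrite !inE => /andP [-> /lt_trans]; apply.
by exists z; rewrite !inE ?Sz ?lt_zb ?ltxx.
Qed.

Lemma chainU_sep E F a : chain E -> chain F ->
  {in E, forall x, x <= a} -> {in F, forall x, a <= x} -> chain (E :|: F).
Proof.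
move=> cE cF le_E ge_F x y; rewrite !inE => /orP [xE|xF] /orP [yE|yF].
- exact: cE.
- by rewrite le_comparable // (le_trans (le_E _ xE) (ge_F _ yF)).
- by rewrite ge_comparable // (le_trans (le_E _ yE) (ge_F _ xF)).
- exact: cF.
Qed.

Definition two_chain_cover S := exists C1 C2, [/\ S = C1 :|: C2, chain C1 & chain C2].

Lemma two_chain_cover_sep S a1 a2 : two_chain_cover S -> a1 \in S -> a2 \in S -> a1 >< a2 ->
  exists E1 E2, [/\ S = E1 :|: E2, chain E1, chain E2, a1 \in E1 & a2 \in E2].
Proof.
move=> [C1 [C2 [eS c1 c2]]] S1 S2 nc; move: S1 S2; rewrite eS !inE.
case/orP=> i1; case/orP=> i2.
- by rewrite c1 in nc.
- by exists C1, C2.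
- by exists C2, C1; rewrite setUC.
- by rewrite c2 in nc.
Qed.

Lemma chain_le_of_incomparable C a1 a2 : chain C -> a1 \in C -> a1 >< a2 ->
  {in C, forall x, (x <= a1) || (x <= a2) -> x <= a1}.
Proof.
move=> cC Ca1 nc x Cx /orP [//|le_x2]; case/orP: (cC x a1 Cx Ca1) => // le_1x.
by rewrite (le_comparable (le_trans le_1x le_x2)) in nc.
Qed.

Lemma chain_ge_of_incomparable C a1 a2 : chain C -> a1 \in C -> a1 >< a2 ->
  {in C, forall x, (a1 <= x) || (a2 <= x) -> a1 <= x}.
Proof.
move=> cC Ca1 nc x Cx /orP [//|le_2x]; case/orP: (cC x a1 Cx Ca1) => // le_x1.
by rewrite (ge_comparable (le_trans le_2x le_x1)) in nc.
Qed.

Lemma width2S S1 S2 : S1 \subset S2 -> width2 S2 -> width2 S1.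
Proof. by move=> /subsetP sub w x y z /sub Sx /sub Sy /sub Sz; apply: w. Qed.

Definition below2 S a1 a2 := [set x in S | (x <= a1) || (x <= a2)].
Definition above2 S a1 a2 := [set x in S | (a1 <= x) || (a2 <= x)].

Lemma width2_below2_above2 S a1 a2 : width2 S -> a1 \in S -> a2 \in S -> a1 >< a2 ->
  S = below2 S a1 a2 :|: above2 S a1 a2.
Proof.
move=> wS Sa1 Sa2 nc; apply/setP => x; rewrite !inE; case Sx: (x \in S) => //=.
case/or3P: (wS x a1 a2 Sx Sa1 Sa2) => [/orP [] -> | c12 | /orP [] ->]; rewrite ?orbT //.
by rewrite c12 in nc.
Qed.

Lemma two_chain_cover_glue S a1 a2 : width2 S -> a1 \in S -> a2 \in S -> a1 >< a2 ->
  two_chain_cover (below2 S a1 a2) -> two_chain_cover (above2 S a1 a2) ->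
  two_chain_cover S.
Proof.
move=> wS Sa1 Sa2 nc cover_m cover_p.
have ma1 : a1 \in below2 S a1 a2 by rewrite inE Sa1 lexx.
have ma2 : a2 \in below2 S a1 a2 by rewrite inE Sa2 lexx orbT.
have pa1 : a1 \in above2 S a1 a2 by rewrite inE Sa1 lexx.
have pa2 : a2 \in above2 S a1 a2 by rewrite inE Sa2 lexx orbT.
have [E1 [E2 [eSm cE1 cE2 E1a1 E2a2]]] := two_chain_cover_sep cover_m ma1 ma2 nc.
have [F1 [F2 [eSp cF1 cF2 F1a1 F2a2]]] := two_chain_cover_sep cover_p pa1 pa2 nc.
have nc' : a2 >< a1 by rewrite comparable_sym.
have in_m x : x \in E1 :|: E2 -> (x <= a1) || (x <= a2) by rewrite -eSm inE => /andP [].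
have in_p x : x \in F1 :|: F2 -> (a1 <= x) || (a2 <= x) by rewrite -eSp inE => /andP [].
exists (E1 :|: F1), (E2 :|: F2); split.
- by rewrite (width2_below2_above2 wS Sa1 Sa2 nc) eSm eSp setUACA.
- apply: (chainU_sep cE1 cF1) => x xE.
  + by apply: (chain_le_of_incomparable cE1 E1a1 nc xE); rewrite in_m // inE xE.
  + by apply: (chain_ge_of_incomparable cF1 F1a1 nc xE); rewrite in_p // inE xE.
- apply: (chainU_sep cE2 cF2) => x xE.
  + apply: (chain_le_of_incomparable cE2 E2a2 nc' xE).
    by rewrite orbC in_m // inE xE orbT.
  + apply: (chain_ge_of_incomparable cF2 F2a2 nc' xE).
    by rewrite orbC in_p // inE xE orbT.
Qed.

(* Dilworth's theorem for width two, by induction: either S minus a minimal-below-maximal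
   pair {b, t} is a chain, or two incomparable elements split S into the proper subsets
   below2 (missing t) and above2 (missing b). *)
Lemma width2_two_chain_cover S : width2 S -> two_chain_cover S.
Proof.
have [n] := ubnP #|S|; elim: n S => // n IH S ltSn wS.
have [->|nS] := eqVneq S set0.
  by exists set0, set0; split; [rewrite setU0|move=> x y; rewrite inE..].
have [t St max_t] := set_has_maximal nS.
have [|b] := @set_has_minimal [set z in S | z <= t].
  by apply/set0Pn; exists t; rewrite inE St lexx.
rewrite inE => /andP [Sb le_bt] min_bt.
have min_b z : z \in S -> z <= b -> z = b.
  by move=> Sz le_zb; apply: min_bt; rewrite // inE Sz (le_trans le_zb le_bt).
set R := S :\: [set b; t].
have [/existsP [a1 /existsP [a2 /and3P [Ra1 Ra2 nc]]] | /existsPn none] :=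
  boolP [exists a1, exists a2, [&& a1 \in R, a2 \in R & a1 >< a2]]; last first.
  exists [set b; t], R; split.
  - by rewrite -{1}(setID S [set b; t]) (setIidPr _) // subUset !sub1set Sb St.
  - by move=> x y; rewrite !inE => /orP [] /eqP -> /orP [] /eqP ->;
      first [exact: comparablexx | exact: le_comparable | exact: ge_comparable].
  - by move=> x y Rx Ry; move: (none x) => /existsPn /(_ y); rewrite Rx Ry negbK.
move: Ra1 Ra2; rewrite !inE !negb_or.
move=> /andP [/andP [a1b a1t] Sa1] /andP [/andP [a2b a2t] Sa2].
have IH_proper S' : S' \proper S -> two_chain_cover S'.
  move=> ltS; apply: IH; first exact: leq_trans (proper_card ltS) ltSn.
  by apply: width2S wS; apply: proper_sub.
apply: (two_chain_cover_glue wS Sa1 Sa2 nc); apply: IH_proper; apply/properP.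
- split; first by apply/subsetP => x; rewrite inE => /andP [].
  exists t => //; rewrite inE St negb_or /=.
  by apply/andP; split;
    [apply: contraNN a1t => /(max_t _ Sa1) -> | apply: contraNN a2t => /(max_t _ Sa2) ->].
- split; first by apply/subsetP => x; rewrite inE => /andP [].
  exists b => //; rewrite inE Sb negb_or /=.
  by apply/andP; split;
    [apply: contraNN a1b => /(min_b _ Sa1) -> | apply: contraNN a2b => /(min_b _ Sa2) ->].
Qed.

End WidthTwo.

Section DownSets.
Context {disp : Order.disp_t} {T : finPOrderType disp}.
Implicit Types (K : {set T}) (x y : T).

Definition down_in K x := [set j in K | j <= x].

Lemma chain_down_in_inj K x y :
  chain K -> #|down_in K x| = #|down_in K y| -> down_in K x = down_in K y.
Proof.
move=> cK e_card.
have [sub|/subsetPn [u ux uy]] := boolP (down_in K x \subset down_in K y).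
  by apply/eqP; rewrite eqEcard sub e_card leqnn.
apply/esym/eqP; rewrite eqEcard e_card leqnn andbT; apply/subsetP => v vy.
move: ux uy vy; rewrite !inE => /andP [Ku le_ux] /nandP [/negP//|nle_uy] /andP [Kv le_vy].
rewrite Kv /=; apply: contraNT nle_uy => nle_vx.
case/orP: (cK _ _ Ku Kv) => [/le_trans -> //|le_vu].
by rewrite (le_trans le_vu le_ux) in nle_vx.
Qed.

End DownSets.

Section GridEdges.
Local Open Scope ring_scope.
Implicit Types (X Y : nat) (p : rat * rat) (t : rat).

Definition grid_pt X Y : rat * rat := (X%:R, Y%:R).

Lemma grid_pt_inj X Y X' Y' : grid_pt X Y = grid_pt X' Y' -> X = X' /\ Y = Y'.
Proof. by case=> /eqP + /eqP; rewrite !eqr_nat => /eqP -> /eqP ->. Qed.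

Lemma nat_eq_of_dist_lt1 (a b : nat) :
  (a%:R - b%:R : rat) < 1 -> (b%:R - a%:R : rat) < 1 -> a = b.
Proof.
move=> h1 h2; case: (ltngtP a b) => // h; exfalso.
- have : (a%:R : rat) + 1 <= b%:R by rewrite natr1 ler_nat.
  by clear h; lra.
- have : (b%:R : rat) + 1 <= a%:R by rewrite natr1 ler_nat.
  by clear h; lra.
Qed.

Lemma nat_dist_le1 (a b : nat) :
  (a%:R - b%:R : rat) <= 1 -> (b%:R - a%:R : rat) <= 1 ->
  [\/ a = b, a = b.+1 | b = a.+1].
Proof.
move=> h1 h2; case: (ltngtP a b) => [lt_ab|lt_ba|]; last by constructor 1.
- case: (ltngtP a.+1 b) => [h|h|]; last by constructor 3.
  + have : (a%:R : rat) + 1 + 1 <= b%:R by rewrite !natr1 ler_nat.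
    by clear lt_ab h; lra.
  + by rewrite ltnS leqNgt lt_ab in h.
- case: (ltngtP b.+1 a) => [h|h|]; last by constructor 2.
  + have : (b%:R : rat) + 1 + 1 <= a%:R by rewrite !natr1 ler_nat.
    by clear lt_ba h; lra.
  + by rewrite ltnS leqNgt lt_ba in h.
Qed.

Lemma on_grid_edgeP X Y e p :
  on_segment p (grid_pt X Y) (grid_pt (X + e) Y.+1) ->
  exists t, [/\ 0 <= t, t <= 1, p.1 = X%:R + t * e%:R & p.2 = Y%:R + t].
Proof.
case=> t [t0 t1 e1 e2]; exists t; split => //.
- by rewrite e1 /grid_pt /= natrD addrAC subrr add0r.
- by rewrite e2 /grid_pt /= -natr1 addrAC subrr add0r mulr1.
Qed.

Lemma grid_pt_on_grid_edge X Y e X' Y' :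
  on_segment (grid_pt X' Y') (grid_pt X Y) (grid_pt (X + e) Y.+1) ->
  grid_pt X' Y' = grid_pt X Y \/ grid_pt X' Y' = grid_pt (X + e) Y.+1.
Proof.
move=> /on_grid_edgeP [t [t0 t1 /= e1 e2]].
have : [\/ Y' = Y, Y' = Y.+1 | Y = Y'.+1] by apply: nat_dist_le1; lra.
rewrite /grid_pt natrD; case=> eY; subst; rewrite -?natr1 in e2.
- have t0' : t = 0 by lra.
  by left; congr pair; rewrite e1 t0' mul0r addr0.
- have t1' : t = 1 by lra.
  by right; congr pair; rewrite e1 t1' mul1r.
- by exfalso; lra.
Qed.

(* Edges between the same two rows can meet strictly between them only if they coincide:
   their horizontal offset there is an integer plus 0, t or -t with 0 < t < 1. *)
Lemma grid_edges_meet X1 Y1 e1 X2 Y2 e2 p : (e1 <= 1)%N -> (e2 <= 1)%N ->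
  on_segment p (grid_pt X1 Y1) (grid_pt (X1 + e1) Y1.+1) ->
  on_segment p (grid_pt X2 Y2) (grid_pt (X2 + e2) Y2.+1) ->
  [/\ X1 = X2, Y1 = Y2 & e1 = e2] \/
  (p = grid_pt X1 Y1 \/ p = grid_pt (X1 + e1) Y1.+1) /\
  (p = grid_pt X2 Y2 \/ p = grid_pt (X2 + e2) Y2.+1).
Proof.
move=> le_e1 le_e2 /on_grid_edgeP [t [t0 t1 f1 f2]] /on_grid_edgeP [s [s0 s1 g1 g2]].
case: p f1 f2 g1 g2 => [p1 p2] /= f1 f2 g1 g2.
have : [\/ Y1 = Y2, Y1 = Y2.+1 | Y2 = Y1.+1] by apply: nat_dist_le1; lra.
rewrite /grid_pt !natrD -!natr1.
case=> eY; [subst Y1|subst Y1|subst Y2]; rewrite -?natr1 in f2 g2.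
- have ts : t = s by lra.
  subst s; have [t0'|tn0] := eqVneq t 0.
    by subst t; right; rewrite !mul0r !addr0 in f1 g1; split; left; congr pair; lra.
  have [t1'|tn1] := eqVneq t 1.
    by subst t; right; rewrite !mul1r in f1 g1; split; right; congr pair; lra.
  have tp : 0 < t by rewrite lt_def tn0.
  have tl : t < 1 by rewrite lt_def eq_sym tn1.
  case: e1 e2 le_e1 le_e2 f1 g1 => [|[|//]] [|[|//]] _ _ f1 g1;
    rewrite ?mulr0 ?mulr1 in f1 g1.
  + by left; split => //; apply: nat_eq_of_dist_lt1; lra.
  + have eX : X1 = X2 by apply: nat_eq_of_dist_lt1; lra.
    by subst; exfalso; lra.
  + have eX : X1 = X2 by apply: nat_eq_of_dist_lt1; lra.
    by subst; exfalso; lra.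
  + by left; split => //; apply: nat_eq_of_dist_lt1; lra.
- have t0' : t = 0 by lra.
  have s1' : s = 1 by lra.
  subst t s; right; rewrite mul1r in g1; rewrite mul0r addr0 in f1.
  by split; [left|right]; congr pair; lra.
- have t1' : t = 1 by lra.
  have s0' : s = 0 by lra.
  subst t s; right; rewrite mul1r in f1; rewrite mul0r addr0 in g1.
  by split; [right|left]; congr pair; lra.
Qed.

End GridEdges.

Section DownSetsCovers.
Context {disp : Order.disp_t} {D : finTBDistrLatticeType disp}.

Lemma card_down_in_covers (K : {set D}) x y j0 : covers x y ->
  {in K, forall j, join_irr j} -> j0 <= y -> ~~ (j0 <= x) ->
  (forall j, join_irr j -> j <= y -> ~~ (j <= x) -> j = j0) ->
  #|down_in K y| = (#|down_in K x| + (j0 \in K))%N.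
Proof.
move=> /andP [/ltW le_xy _] jK le_j0y nle_j0x label.
have new j : j \in K -> j <= y -> ~~ (j <= x) -> j = j0.
  by move=> Kj; apply: label; apply: jK.
case: (boolP (j0 \in K)) => Kj0.
- have -> : down_in K y = j0 |: down_in K x.
    apply/setP => j; rewrite !inE; have [->|ne] := eqVneq j j0; first by rewrite Kj0 le_j0y.
    case: (boolP (j \in K)) => //= Kj; case: (boolP (j <= x)) => [le_jx|nle_jx].
      by rewrite (le_trans le_jx le_xy).
    by apply/negP => le_jy; rewrite (new j Kj le_jy nle_jx) eqxx in ne.
  by rewrite cardsU1 inE (negbTE nle_j0x) andbF addnC.
- rewrite addn0; apply: eq_card => j; rewrite !inE.
  case: (boolP (j \in K)) => //= Kj; case: (boolP (j <= x)) => [le_jx|nle_jx].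
    by rewrite (le_trans le_jx le_xy).
  by apply/negP => le_jy; rewrite -(new j Kj le_jy nle_jx) Kj in Kj0.
Qed.

End DownSetsCovers.

Section GridDrawing.
Context {disp : Order.disp_t} {D : finTBDistrLatticeType disp}.
Variables C1 C2 : {set D}.
Hypotheses (chain_C1 : chain C1) (chain_C2 : chain C2)
  (join_irr_cover : [set x | join_irrb x] = C1 :|: C2).

Let K2 := C2 :\: C1.

Lemma chain_K2 : chain K2.
Proof. by move=> x y; rewrite !inE => /andP [_ Cx] /andP [_ Cy]; apply: chain_C2. Qed.

Lemma join_irr_inK j : join_irr j <-> (j \in C1) || (j \in K2).
Proof.
have -> : (j \in C1) || (j \in K2) = (j \in C1 :|: C2) by rewrite !inE; case: (j \in C1).
by rewrite -join_irr_cover inE; apply: rwP; apply: join_irrP.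
Qed.

(* The height of [grid_pos x] is the number of join-irreducibles below [x]; a covering pair
   adds exactly one of them, and the abscissa moves iff it lies in C1. *)
Definition grid_pos x := grid_pt #|down_in C1 x| (#|down_in C1 x| + #|down_in K2 x|).

Lemma grid_pos_covers x y : covers x y -> exists2 e, (e <= 1)%N &
  grid_pos y = grid_pt (#|down_in C1 x| + e) (#|down_in C1 x| + #|down_in K2 x|).+1.
Proof.
move=> cov; have [j0 [jj0 le_j0y nle_j0x label]] := covers_join_irr cov.
have jK (K : {set D}) : K \subset C1 :|: C2 -> {in K, forall j, join_irr j}.
  by move=> /subsetP sub j /sub; rewrite -join_irr_cover inE => /join_irrP.
have e1 := card_down_in_covers cov (jK _ (subsetUl _ _)) le_j0y nle_j0x label.
have e2 := card_down_in_covers cov (jK _ (subset_trans (subsetDl _ _) (subsetUr _ _)))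
  le_j0y nle_j0x label.
exists (j0 \in C1); first by case: (j0 \in C1).
rewrite /grid_pos e1 e2; congr grid_pt; move/join_irr_inK: jj0; rewrite /K2 !inE.
by case: (j0 \in C1); case: (j0 \in C2) => //= _; rewrite ?addn0 ?addn1 ?addnS.
Qed.

Lemma grid_pos_inj : injective grid_pos.
Proof.
move=> x y /grid_pt_inj [e1 /eqP]; rewrite e1 eqn_add2l => /eqP e2.
have d1 := chain_down_in_inj chain_C1 e1; have d2 := chain_down_in_inj chain_K2 e2.
have same j : join_irr j -> (j <= x) = (j <= y).
  move=> /join_irr_inK /orP [] Kj.
    by move/setP: d1 => /(_ j); rewrite !in_set Kj.
  by move/setP: d2 => /(_ j); move: Kj; rewrite !inE => /andP [-> ->].
by apply: le_anti; rewrite !join_irr_le // => j jj; rewrite (same j jj).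
Qed.

Lemma grid_pos_drawing : planar_drawing grid_pos.
Proof.
split.
- exact: grid_pos_inj.
- by move=> x y /grid_pos_covers [e _ ->]; rewrite /grid_pos /grid_pt /= ltr_nat.
- move=> x y z /grid_pos_covers [e _ e_y] ne_zx ne_zy; rewrite e_y.
  case/grid_pt_on_grid_edge => e_z.
  + by move/eqP: ne_zx; apply; apply: grid_pos_inj.
  + by move/eqP: ne_zy; apply; apply: grid_pos_inj; rewrite e_y.
- move=> x1 y1 x2 y2 /grid_pos_covers [e1 le_e1 e_y1] /grid_pos_covers [e2 le_e2 e_y2] ne p.
  rewrite e_y1 e_y2 => on1 on2.
  case: (grid_edges_meet le_e1 le_e2 on1 on2) => [[eX eY ee]|[end1 end2]].
    have ex : x1 = x2 by apply: grid_pos_inj; rewrite /grid_pos eY eX.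
    have ey : y1 = y2 by apply: grid_pos_inj; rewrite e_y1 e_y2 eY eX ee.
    by rewrite ex ey eqxx in ne.
  have [v1 v1_in p_v1] : exists2 v, v \in [:: x1; y1] & p = grid_pos v.
    by case: end1 => ->; [exists x1 | exists y1]; rewrite ?inE ?eqxx ?orbT ?e_y1.
  have [v2 v2_in p_v2] : exists2 v, v \in [:: x2; y2] & p = grid_pos v.
    by case: end2 => ->; [exists x2 | exists y2]; rewrite ?inE ?eqxx ?orbT ?e_y2.
  by exists v1; split => //; rewrite (grid_pos_inj (etrans (esym p_v1) p_v2)).
Qed.

End GridDrawing.

Lemma planar_of_join_irr_width2 {disp : Order.disp_t} {D : finTBDistrLatticeType disp} :
  width2 [set x : D | join_irrb x] -> planar (L := D).
Proof.
case/width2_two_chain_cover => C1 [C2 [cover c1 c2]].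
by exists (grid_pos C1 C2); apply: grid_pos_drawing.
Qed.

Lemma rel_map_of_coordinatewise {T U : Type} n (F : ('I_n -> T) -> U)
    (E : T -> T -> Prop) (R : U -> U -> Prop) :
  (forall x, R x x) -> (forall x y z, R x y -> R y z -> R x z) ->
  (forall w i z z', E z z' ->
     R (F (fun j => if j == i then z else w j)) (F (fun j => if j == i then z' else w j))) ->
  forall u v, (forall i, E (u i) (v i)) -> R (F u) (F v).
Proof.
move=> Rrefl Rtrans Rcoord u v Euv.
pose mix k (i : 'I_n) := if (i < k)%N then v i else u i.
suff mixP k : R (F u) (F (mix k)).
  have -> : v = mix n by apply: functional_extensionality => i; rewrite /mix ltn_ord.
  exact: mixP.
elim: k => [|k IH].
  by have -> : mix 0%N = u by apply: functional_extensionality.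
apply: Rtrans IH _.
have [lt_kn|le_nk] := ltnP k n; last first.
  have -> : mix k.+1 = mix k.
    apply: functional_extensionality => i.
    by rewrite /mix (leq_trans (ltn_ord i) le_nk) (leq_trans (ltn_ord i)) // ltnW.
  exact: Rrefl.
pose i0 := Ordinal lt_kn.
have e_k : mix k = (fun j => if j == i0 then u i0 else mix k j).
  by apply: functional_extensionality => j; case: eqP => // ->; rewrite /mix ltnn.
have e_k1 : mix k.+1 = (fun j => if j == i0 then v i0 else mix k j).
  apply: functional_extensionality => j; rewrite /mix ltnS leq_eqVlt.
  have [->|ne] := eqVneq j i0; first by rewrite /= !eqxx.
  by move: ne; rewrite -val_eqE /= => /negbTE ->.
by rewrite e_k e_k1; apply: Rcoord.
Qed.

Lemma con_congruence (A : algebra) (a b : carrier A) : is_congruence (con a b).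
Proof.
split.
- by move=> x R [Rrefl _ _ _].
- move=> x y Rxy R congR Rab; case: (congR) => _ Rsym _ _.
  exact/Rsym/(Rxy R congR Rab).
- move=> x y z Rxy Ryz R congR Rab; case: (congR) => _ _ Rtrans _.
  exact: Rtrans (Rxy R congR Rab) (Ryz R congR Rab).
- move=> f u v Ruv R congR Rab; case: (congR) => _ _ _ Rop.
  by apply: Rop => i; apply: Ruv.
Qed.

Section Representation.
Context {disp : Order.disp_t} {D : finTBDistrLatticeType disp}.
Variables (A : algebra) (phi : (carrier A -> carrier A -> Prop) -> D) (Q : {set D}).
Hypothesis rep : represents phi Q.
Implicit Types (a b x y z w : carrier A) (d t : D).

Lemma phi_onto d : exists2 R, is_congruence R & phi R = d.
Proof. by case: rep => _ onto _; apply: onto. Qed.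

Lemma phi_le_iff R S : is_congruence R -> is_congruence S ->
  (forall x y, R x y -> S x y) <-> phi R <= phi S.
Proof. by case: rep => emb _ _; apply: emb. Qed.

Lemma phi_con_leP a b R : is_congruence R -> phi (con a b) <= phi R <-> R a b.
Proof.
move=> congR; rewrite -(phi_le_iff (con_congruence a b) congR).
split=> [le | Rab x y con_xy]; first by apply: le => S _.
exact: con_xy R congR Rab.
Qed.

Lemma phi_con_le a b d : phi (con a b) <= d <->
  forall R, is_congruence R -> phi R = d -> R a b.
Proof.
split=> [le R congR eR|all]; first by apply/(phi_con_leP a b congR); rewrite eR.
have [R congR eR] := phi_onto d; rewrite -eR.
by apply/(phi_con_leP a b congR); apply: all.
Qed.

Lemma phi_con_refl a : phi (con a a) = \bot.
Proof. by apply/le_anti; rewrite le0x andbT; apply/phi_con_le => R [Rrefl _ _ _] _. Qed.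

Lemma phi_conC a b : phi (con a b) = phi (con b a).
Proof.
have le x y : phi (con x y) <= phi (con y x).
  apply/phi_con_le => R congR eR; case: (congR) => _ Rsym _ _.
  by apply/Rsym/(phi_con_leP y x congR); rewrite eR.
by apply: le_anti; rewrite !le.
Qed.

Lemma phi_con_trans x y z : phi (con x z) <= phi (con x y) `|` phi (con y z).
Proof.
apply/phi_con_le => R congR eR; case: (congR) => _ _ Rtrans _.
by apply: (Rtrans _ y); apply/(phi_con_leP _ _ congR); rewrite eR ?leUl ?leUr.
Qed.

Lemma phi_con_in_Q a b : phi (con a b) \in Q.
Proof. by case: rep => _ _ inQ; apply/inQ; exists a, b. Qed.

Lemma phi_con_of_Q d : d \in Q -> exists a b, phi (con a b) = d.
Proof. by case: rep => _ _ inQ /inQ. Qed.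

Lemma top_of_phi_con_le a t : (forall x, phi (con a x) <= t) -> t = \top.
Proof.
move=> le_t; apply/le_anti; rewrite lex1 /=.
have [Rt congRt <-] := phi_onto \top; have [R congR eR] := phi_onto t.
rewrite -eR in le_t *.
apply/phi_le_iff => // x y _; case: (congR) => _ Rsym Rtrans _.
by apply: (Rtrans _ a); [apply: Rsym|]; apply/(phi_con_leP _ _ congR); apply: le_t.
Qed.

Lemma phi_con_op_le f (w : 'I_(arity f) -> carrier A) i z z' d :
  phi (con z z') <= d ->
  phi (con (op (fun j => if j == i then z else w j))
           (op (fun j => if j == i then z' else w j))) <= d.
Proof.
move=> /phi_con_le le; apply/phi_con_le => R congR eR; case: (congR) => Rrefl _ _ Rop.
by apply: Rop => j; case: eqP => _; [apply: le|apply: Rrefl].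
Qed.

Section Generation.
Variable P : D -> Prop.

Definition step_closed (B : carrier A -> Prop) :=
  forall z w d, B z -> P d -> phi (con z w) <= d -> B w.

Definition linked x y := forall B, B x -> step_closed B -> B y.

Lemma linked_step z w d : P d -> phi (con z w) <= d -> linked z w.
Proof. by move=> Pd le B Bz closedB; apply: closedB Bz Pd le. Qed.

Lemma linked_trans x y z : linked x y -> linked y z -> linked x z.
Proof. by move=> lxy lyz B Bx closedB; apply: lyz (lxy B Bx closedB) closedB. Qed.

Lemma linked_sym x y : linked x y -> linked y x.
Proof.
move=> lxy; apply: (lxy (linked^~ x)) => [B //|z w d lzx Pd le].
by apply: linked_trans lzx; apply: (linked_step Pd); rewrite phi_conC.
Qed.

Lemma linked_congruence : is_congruence linked.
Proof.
split; [by move=> x B | exact: linked_sym | exact: linked_trans |].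
move=> f; apply: rel_map_of_coordinatewise (@linked_trans) _ => [x B //|w i z z' lzz'].
apply: (lzz' (fun y => linked _ (op (fun j => if j == i then y else w j)))) => [B //|].
move=> y y' d lzy Pd le; apply: linked_trans lzy _.
exact: linked_step Pd (phi_con_op_le _ _ le).
Qed.

(* [linked] is a congruence containing every congruence whose image lies in [P], so its
   image bounds [P] from above and [linked a b] holds. *)
Lemma step_closed_reach B a b : B a -> step_closed B ->
  (forall t, (forall d, P d -> d <= t) -> phi (con a b) <= t) -> B b.
Proof.
move=> Ba closedB le_ab; suff lab : linked a b by apply: lab Ba closedB.
apply/(phi_con_leP a b linked_congruence)/le_ab => d Pd.
have [R congR eR] := phi_onto d; rewrite -eR.
apply/phi_le_iff => // [|x y Rxy]; first exact: linked_congruence.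
by apply: (linked_step Pd); rewrite -eR; apply/(phi_con_leP x y congR).
Qed.

End Generation.

End Representation.

Definition Jplus_with {disp : Order.disp_t} {D : finTBDistrLatticeType disp} (s : D) :=
  [set x : D | [|| join_irrb x, x == \bot, x == \top | x == s]].

Lemma Jplus_with_Jplus {disp : Order.disp_t} {D : finTBDistrLatticeType disp} (s x : D) :
  in_Jplus x -> x \in Jplus_with s.
Proof. by rewrite inE => -[/join_irrP ->|[->|->]]; rewrite ?eqxx ?orbT. Qed.

Section JplusRepresentation.
Context {disp : Order.disp_t} {D : finTBDistrLatticeType disp}.
Variables (s : D) (A : algebra) (phi : (carrier A -> carrier A -> Prop) -> D).
Hypothesis rep : represents phi (Jplus_with s).
Implicit Types (a b x y z w : carrier A).

Lemma phi_con_cases x y : let c := phi (con x y) in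
  [\/ join_irr c, c = \bot, c = \top | c = s].
Proof.
move: (phi_con_in_Q rep x y); rewrite inE => /or4P [/join_irrP|/eqP|/eqP|/eqP] h;
  [exact: Or41 | exact: Or42 | exact: Or43 | exact: Or44].
Qed.

Lemma exists_phi_con_eq_s : exists a b, phi (con a b) = s.
Proof. by apply: (phi_con_of_Q rep); rewrite inE eqxx !orbT. Qed.

(* Starting from [a], steps inside [p], [q] or [r] never reach a pair generating [s]: a
   principal congruence strictly below [s] lies below one of them, since it is
   join-irreducible or zero. *)
Lemma join_irr_triple_comparable p q r : join_irr p -> join_irr q -> join_irr r ->
  s = p `|` q `|` r -> [|| p >=< q, q >=< r | p >=< r].
Proof.
move=> jp jq jr e_s; apply: contraT => /norP [npq /norP [nqr npr]].
have nle2 := join_antichain3_nle jp jq jr npq nqr npr; rewrite -e_s in nle2.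
have le_ps : p <= s by rewrite e_s -joinA leUl.
have le_qs : q <= s by rewrite e_s joinAC leUr.
have le_rs : r <= s by rewrite e_s leUr.
have [a [b e_ab]] := exists_phi_con_eq_s.
suff : phi (con a b) < s by rewrite e_ab ltxx.
apply: (step_closed_reach rep (P := fun d => d \in [:: p; q; r])
          (B := fun x => phi (con a x) < s) (a := a)).
- rewrite (phi_con_refl rep) lt_def le0x andbT; case: jp => nbp _.
  by apply: contraNneq nbp => e0; apply/eqP/le_anti; rewrite le0x -e0 le_ps.
- move=> z w d lt_z Pd le_zw.
  have le_d : d <= s by move: Pd; rewrite !inE => /or3P [] /eqP ->.
  have tri := phi_con_trans rep a z w.
  rewrite lt_def (le_trans tri) ?leUx ?(ltW lt_z) ?(le_trans le_zw le_d) // andbT.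
  apply/eqP => e_w; have le_s : s <= phi (con a z) `|` d.
    by rewrite e_w (le_trans tri) // leU2.
  case: (phi_con_cases a z) => [jz|e0|e1|e_s'].
  + have [X X_in le_zX] : exists2 X, X \in [:: p; q; r] & phi (con a z) <= X.
      move: (ltW lt_z); rewrite e_s => /(join_irr_prime jz) [/(join_irr_prime jz) []|] le;
        [exists p|exists q|exists r]; rewrite ?inE ?eqxx ?orbT //.
    by move: (nle2 X d X_in Pd); rewrite (le_trans le_s) // leU2.
  + by move: (nle2 d d Pd Pd); rewrite joinxx -{1}(join0x d) -e0 le_s.
  + by have := lt_geF lt_z; rewrite e1 lex1.
  + by rewrite e_s' ltxx in lt_z.
- by move=> t ub; rewrite e_ab e_s !leUx !ub // !inE eqxx ?orbT.
Qed.

Lemma phi_con_neq_coatom c x y : coatom c -> join_red c -> c != \bot -> c != s ->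
  phi (con x y) != c.
Proof.
move=> cov jrc nbc nsc; apply/eqP => e; case: (phi_con_cases x y); rewrite /= e.
- exact: jrc.
- by apply/eqP.
- by move=> e1; have := coatom_lt cov; rewrite e1 ltxx.
- by apply/eqP.
Qed.

Section Coatoms.
Variables (d1 d2 : D).
Hypotheses (cov1 : coatom d1) (cov2 : coatom d2) (jr2 : join_red d2) (ne12 : d1 != d2)
  (e_s : s = d1 `&` d2).

(* Were [phi (con a w)] not below [s], then [phi (con b w)] would be squeezed to equal
   [d2], which is not principal. *)
Lemma phi_con_coatom_step a b z w : phi (con a b) = s ->
  phi (con a z) <= s -> phi (con z w) <= d2 -> phi (con a w) <= s.
Proof.
move=> e_ab le_z le_zw; set w0 := phi (con a w).
have le_w2 : w0 <= d2.
  apply: le_trans (phi_con_trans rep a z w) _; rewrite leUx le_zw andbT.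
  by apply: le_trans le_z _; rewrite e_s leIr.
rewrite e_s lexI le_w2 andbT; apply: contraT => nle_w1.
have nle_ws : ~~ (w0 <= s) by apply: contra nle_w1 => /le_trans; apply; rewrite e_s leIl.
have jw : join_irr w0.
  move: (phi_con_cases a w) => /=; rewrite -/w0 => -[//|e0|e1|e_w].
  - by rewrite e0 le0x in nle_w1.
  - by have := lt_geF (coatom_lt cov2); rewrite -e1 le_w2.
  - by rewrite e_w lexx in nle_ws.
set g := phi (con b w).
have le_wg : w0 <= g.
  have : w0 <= s `|` g by rewrite -e_ab; apply: (phi_con_trans rep).
  by case/(join_irr_prime jw) => // le; rewrite le in nle_ws.
have le_sg : s <= g.
  by have := phi_con_trans rep a w b; rewrite e_ab (phi_conC rep w b) (join_idPr le_wg).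
have e_d2 : s `|` w0 = d2 by rewrite e_s coatom_meet_join.
have e_g : g = d2.
  apply: le_anti; rewrite -e_d2 leUx le_sg le_wg andbT -e_ab.
  by rewrite (phi_conC rep a b) andbT; apply: (phi_con_trans rep).
have nbd2 : d2 != \bot by apply: contraTneq le_w2 => ->; rewrite lex0; case: jw.
have nsd2 : d2 != s.
  by apply: contra ne12 => /eqP e2; rewrite (coatom_le_eq cov2 cov1) // e2 e_s leIl.
by have := phi_con_neq_coatom b w cov2 jr2 nbd2 nsd2; rewrite -/g e_g eqxx.
Qed.

End Coatoms.

Lemma join_red_coatoms_eq c1 c2 : coatom c1 -> join_red c1 -> coatom c2 -> join_red c2 ->
  s = c1 `&` c2 -> c1 = c2.
Proof.
move=> cov1 jr1 cov2 jr2 e_s; apply/eqP; apply: contraT => ne12.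
have e_top : c1 `|` c2 = \top.
  apply: (covers_joinE cov1 (lex1 _)); apply: contra ne12 => le21.
  by rewrite (coatom_le_eq cov2 cov1).
have [a [b e_ab]] := exists_phi_con_eq_s.
have all_le x : phi (con a x) <= s.
  apply: (step_closed_reach rep (P := fun d => d = c1 \/ d = c2)
           (B := fun x => phi (con a x) <= s) (a := a)).
  - by rewrite (phi_con_refl rep) le0x.
  - move=> z w d le_z [->|->] le_zw.
    + apply: (phi_con_coatom_step cov2 cov1 jr1 _ _ e_ab) le_z le_zw.
      * by rewrite eq_sym.
      * by rewrite meetC.
    + exact: (phi_con_coatom_step cov1 cov2 jr2 ne12 e_s e_ab le_z le_zw).
  - by move=> t ub; apply: le_trans (lex1 _) _; rewrite -e_top leUx !ub; [|right|left].
have := top_of_phi_con_le rep all_le; rewrite e_s => /eqP.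
rewrite meet_eq1 => /andP [/eqP e1 _].
by have := coatom_lt cov1; rewrite e1 ltxx.
Qed.

End JplusRepresentation.

Lemma join_irr_width2 {disp : Order.disp_t} {D : finTBDistrLatticeType disp} :
  fully_Aplus1_representable D -> width2 [set x : D | join_irrb x].
Proof.
move=> repD p q r; rewrite !inE => /join_irrP jp /join_irrP jq /join_irrP jr.
have [A [phi rep]] := repD _ (@Jplus_with_Jplus _ _ (p `|` q `|` r)).
exact: (join_irr_triple_comparable rep jp jq jr).
Qed.

Theorem theorem1p3 (disp : Order.disp_t) (D : finTBDistrLatticeType disp) :
  fully_Aplus1_representable D ->
  planar (L := D) /\
  (forall a b : D, coatom a -> join_red a -> coatom b -> join_red b -> a = b).
Proof.
move=> repD; split; first exact/planar_of_join_irr_width2/join_irr_width2.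
move=> c1 c2 cov1 jr1 cov2 jr2.
have [A [phi rep]] := repD _ (@Jplus_with_Jplus _ _ (c1 `&` c2)).
exact: (join_red_coatoms_eq rep cov1 jr1 cov2 jr2).
Qed.
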